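(* Let $(\mathcal{X},\|\cdot\|,\mu_\mathcal{X})$ be a regular Euclidean metric measure space, $m\in(0,1]$, and \[\Psi(x_1,x_2)=\|x_1-x_2\|^2\wedge F_{x_2}^{-1}(m)-E_{Z}\big[\|Z-x_2\|^2\wedge F_{x_2}^{-1}(m)\big],\quad Z\sim\mu_\mathcal{X}.\] Then there is a constant $0<C<\infty$ depending only on $\mathcal{X}$ such that for all $x_1,z_1,z_2\in\mathcal{X}$, $|\Psi(x_1,z_1)-\Psi(x_1,z_2)|\le C\|z_1-z_2\|$.
   Context: A regular Euclidean metric measure space is a triple $(\mathcal{X},\|\cdot\|,\mu_\mathcal{X})$ with $\mathcal{X}\subset\mathbb{R}^d$ compact, $\|\cdot\|$ the Euclidean norm, and $\mu_\mathcal{X}$ a Borel probability measure with $\mathrm{supp}(\mu_\mathcal{X})=\mathcal{X}$ having a Lipschitz continuous Lebesgue density. For $X\sim\mu_\mathcal{X}$, $F_x(t)=P(\|X-x\|^2\le t)$ and $F_x^{-1}(u)=\inf\{t:F_x(t)\ge u\}$ is its quantile function. *)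

From HB Require Import structures.
From mathcomp Require Import all_boot all_order all_algebra.
From mathcomp Require Import all_classical all_reals all_analysis.
Set Implicit Arguments. Unset Strict Implicit. Unset Printing Implicit Defensive.
Import Order.TTheory GRing.Theory Num.Theory.
Import numFieldNormedType.Exports.
Local Open Scope classical_set_scope.
Local Open Scope ring_scope.

(* Points of R^d are represented as d.-tuples of reals; d.-tuple R carries the
   library's product (= Borel) sigma-algebra. *)

Definition sqdist (R : realType) (d : nat) (x y : d.-tuple R) : R :=
  \sum_(i < d) (tnth x i - tnth y i) ^+ 2.

Definition eucl_dist (R : realType) (d : nat) (x y : d.-tuple R) : R :=
  Num.sqrt (sqdist x y).

(* the canonical identification of a tuple with a row vector of R^d, used to
   transport the (product = Euclidean) topology of 'rV[R]_d *)
Definition tuple_to_row (R : realType) (d : nat) (x : d.-tuple R) : 'rV[R]_d :=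
  \row_(i < d) tnth x i.

(* Lebesgue integral on R^d of a nonnegative function, as the iterated integral
   of one-dimensional Lebesgue integrals (Tonelli). *)
Fixpoint leb_int (R : realType) (n : nat) : (n.-tuple R -> \bar R) -> \bar R :=
  match n return (n.-tuple R -> \bar R) -> \bar R with
  | 0 => fun f => f [tuple]
  | n'.+1 => fun f =>
      (\int[@lebesgue_measure R]_(x in setT) leb_int (fun t => f (cons_tuple x t)))%E
  end.

Definition msupport (R : realType) (d : nat)
    (mu : probability (d.-tuple R) R) : set (d.-tuple R) :=
  [set x | forall r : R, 0 < r -> (0 < mu [set y | (eucl_dist x y < r)%R])%E].

Definition has_lipschitz_density (R : realType) (d : nat)
    (mu : probability (d.-tuple R) R) : Prop :=
  exists f : d.-tuple R -> R,
    measurable_fun setT f /\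
    (forall y, 0 <= f y) /\
    (exists L : R, forall x y, `|f x - f y| <= L * eucl_dist x y) /\
    (forall A : set (d.-tuple R), measurable A ->
       mu A = leb_int (fun y => (f y)%:E * (\1_A y)%:E)%E).

Definition regular_euclidean_mms (R : realType) (d : nat)
    (X : set (d.-tuple R)) (mu : probability (d.-tuple R) R) : Prop :=
  compact (@tuple_to_row R d @` X) /\
  msupport mu = X /\
  has_lipschitz_density mu.

Definition cdf_sqdist (R : realType) (d : nat)
    (mu : probability (d.-tuple R) R) (x : d.-tuple R) (t : R) : R :=
  fine (mu [set z | sqdist z x <= t]).

Definition qtl_sqdist (R : realType) (d : nat)
    (mu : probability (d.-tuple R) R) (x : d.-tuple R) (u : R) : R :=
  inf [set t : R | u <= cdf_sqdist mu x t].

Definition Psi (R : realType) (d : nat)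
    (mu : probability (d.-tuple R) R) (m : R) (x1 x2 : d.-tuple R) : R :=
  Order.min (sqdist x1 x2) (qtl_sqdist mu x2 m)
  - fine (\int[mu]_z (Order.min (sqdist z x2) (qtl_sqdist mu x2 m))%:E)%E.

From HB Require Import structures.
From mathcomp Require Import all_boot all_order all_algebra.
From mathcomp Require Import all_classical all_reals all_analysis.
From mathcomp Require Import ring lra.
Import Order.TTheory GRing.Theory Num.Theory.
Import numFieldNormedType.Exports.
Local Open Scope classical_set_scope.
Local Open Scope ring_scope.

(** Write rho(z) for the square root of the quantile F_z^{-1}(m). The ball of
    squared radius t about z1 lies in the ball of radius sqrt t + ||z1 - z2||
    about z2, so rho is 1-Lipschitz, and the truncated distance
    ||x - z||^2 /\ F_z^{-1}(m) is the square of the 1-Lipschitz function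
    ||x - z|| /\ rho(z). Since X is the support of mu it has full measure (its
    complement is covered by countably many null balls), and X is bounded, so
    all these quantities lie in [0, T] for T a bound on the squared diameter of
    X. Hence the truncated distance is (2 sqrt T)-Lipschitz in z, uniformly in
    x, and so is its expectation; the two terms of Psi give C = 4 sqrt T. *)

Lemma cauchy_schwarz_sum {R : realDomainType} {n : nat} (a b : 'I_n -> R) :
  (\sum_i a i * b i) ^+ 2 <= (\sum_i a i ^+ 2) * (\sum_i b i ^+ 2).
Proof.
set A := \sum_i a i ^+ 2; set B := \sum_i b i ^+ 2; set P := \sum_i a i * b i.
have [A0|A_neq0] := eqVneq A 0.
  have a0 i : a i = 0.
    apply/eqP; rewrite -sqrf_eq0; move/eqP: A0.
    rewrite psumr_eq0 => [/allP/(_ i (mem_index_enum _))/=//|j _].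
    exact: sqr_ge0.
  by rewrite /P big1 ?expr0n ?A0 ?mul0r // => i _; rewrite a0 mul0r.
have A_gt0 : 0 < A by rewrite lt0r A_neq0 sumr_ge0 // => i _; exact: sqr_ge0.
have lagrange : A * (A * B - P ^+ 2) = \sum_i (A * b i - P * a i) ^+ 2.
  have expand i : (A * b i - P * a i) ^+ 2 =
      A ^+ 2 * b i ^+ 2 - (2 * A * P) * (a i * b i) + P ^+ 2 * a i ^+ 2.
    by ring.
  under eq_bigr do rewrite expand.
  rewrite big_split /= sumrB -!mulr_sumr -/A -/B -/P; ring.
have : 0 <= A * (A * B - P ^+ 2).
  by rewrite lagrange sumr_ge0 // => i _; exact: sqr_ge0.
by rewrite pmulr_rge0 // subr_ge0.
Qed.

Section EuclideanDistance.
Context {R : realType} {d : nat}.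
Implicit Types x y z w c : d.-tuple R.

Lemma sqdist_ge0 x y : 0 <= sqdist x y.
Proof. by apply: sumr_ge0 => i _; exact: sqr_ge0. Qed.

Lemma sqdistC x y : sqdist x y = sqdist y x.
Proof. by apply: eq_bigr => i _; rewrite -sqrrN opprB. Qed.

Lemma eucl_dist_ge0 x y : 0 <= eucl_dist x y.
Proof. exact: sqrtr_ge0. Qed.

Lemma eucl_distC x y : eucl_dist x y = eucl_dist y x.
Proof. by rewrite /eucl_dist sqdistC. Qed.

Lemma sqdistE x y : sqdist x y = eucl_dist x y ^+ 2.
Proof. by rewrite /eucl_dist sqr_sqrtr // sqdist_ge0. Qed.

Lemma eucl_dist_triangle x y z : eucl_dist x z <= eucl_dist x y + eucl_dist y z.
Proof.
pose a i := tnth x i - tnth y i; pose b i := tnth y i - tnth z i.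
set P := \sum_i a i * b i.
have expand : sqdist x z = sqdist x y + 2 * P + sqdist y z.
  rewrite /sqdist /P mulr_sumr -!big_split /=.
  by apply: eq_bigr => i _; rewrite /a /b; ring.
have P_le : P <= eucl_dist x y * eucl_dist y z.
  apply: le_trans (ler_norm P) _.
  rewrite -ler_sqr ?nnegrE ?mulr_ge0 ?eucl_dist_ge0 // real_normK ?num_real //.
  by rewrite exprMn -!sqdistE; exact: cauchy_schwarz_sum.
rewrite -ler_sqr ?nnegrE ?addr_ge0 ?eucl_dist_ge0 // -sqdistE expand !sqdistE.
lra.
Qed.

Lemma eucl_dist_lipschitz w z1 z2 :
  `|eucl_dist w z1 - eucl_dist w z2| <= eucl_dist z1 z2.
Proof.
have := eucl_dist_triangle w z1 z2; have := eucl_dist_triangle w z2 z1.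
by rewrite (eucl_distC z2) ler_norml => ? ?; apply/andP; split; lra.
Qed.

Lemma measurable_sqdistl z : measurable_fun setT (fun w => sqdist w z).
Proof.
apply: measurable_sum => i; apply: measurable_realfun.measurable_funM;
  by apply: measurable_realfun.measurable_funB => //; exact: measurable_tnth.
Qed.

Lemma measurable_sqdist_le z t : measurable [set w | sqdist w z <= t].
Proof.
have := measurable_sqdistl z measurableT _ (measurable_itv `]-oo, t]).
by rewrite setTI; congr measurable; apply/seteqP; split=> w /=; rewrite in_itv.
Qed.

Lemma measurable_eucl_ball c (r : R) : measurable [set w | eucl_dist c w < r].
Proof.
have [r_le0|r_gt0] := leP r 0.
  suff -> : [set w | eucl_dist c w < r] = set0 by exact: measurable0.
  by apply/seteqP; split=> w //= h; have := eucl_dist_ge0 c w; lra.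
have := measurable_sqdistl c measurableT _ (measurable_itv `]-oo, r ^+ 2[).
rewrite setTI; congr measurable; apply/seteqP; split=> w /=;
  by rewrite in_itv /= sqdistC sqdistE ltr_sqr ?nnegrE ?eucl_dist_ge0 ?ltW.
Qed.

Lemma compact_sqdist_bounded (X : set (d.-tuple R)) :
  compact (@tuple_to_row R d @` X) ->
  exists T : R, 0 < T /\ forall w z, X w -> X z -> sqdist w z <= T.
Proof.
move=> /compact_bounded[M [M_real HM]].
set K := `|M| + 1.
have K_gt0 : 0 < K by rewrite ltr_wpDl.
have coord_le w i : X w -> `|tnth w i| <= K.
  move=> Xw; have -> : tnth w i = tuple_to_row w ord0 i by rewrite mxE.
  apply: le_trans (HM K _ _ (ex_intro2 _ _ w Xw erefl)); last first.
    by apply: le_lt_trans (real_ler_norm M_real) _; rewrite ltrDl.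
  rewrite [X in _ <= X]mx_normrE.
  exact: (le_bigmax _ (fun ij : 'I_1 * 'I_d => `|tuple_to_row w ij.1 ij.2|)
    (ord0, i)).
exists ((4 * K ^+ 2) *+ d + 1); split.
  by rewrite ltr_wpDl // mulrn_wge0 // mulr_ge0 // sqr_ge0.
move=> w z Xw Xz.
suff bound : sqdist w z <= (4 * K ^+ 2) *+ d by rewrite (le_trans bound) ?lerDl.
rewrite -[in X in _ <= X](card_ord d) -sumr_const /sqdist; apply: ler_sum => i _.
move: (coord_le w i Xw) (coord_le z i Xz); rewrite !ler_norml.
move=> /andP[? ?] /andP[? ?]; nra.
Qed.

End EuclideanDistance.

Section SupportOfProbability.
Context {R : realType} {d : nat} (mu : probability (d.-tuple R) R).

Definition rat_point (c : d.-tuple rat) : d.-tuple R :=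
  [tuple ratr (tnth c i) | i < d].

(* Balls with rational centre and radius: a countable base of the topology. *)
Definition rat_ball (p : d.-tuple rat * rat) : set (d.-tuple R) :=
  [set w | eucl_dist (rat_point p.1) w < ratr p.2].

Lemma rat_point_near (y : d.-tuple R) (r : R) : 0 < r ->
  exists c, eucl_dist (rat_point c) y < r.
Proof.
move=> r_gt0; pose e := r / 2 / (d%:R + 1).
have e_gt0 : 0 < e by rewrite !divr_gt0 // ltr_wpDl.
have e_coord i : exists q : rat, ratr q \in `]tnth y i - e, tnth y i + e[.
  by apply: rat_in_itvoo; lra.
exists [tuple projT1 (cid (e_coord i)) | i < d].
have sq_le : sqdist (rat_point [tuple projT1 (cid (e_coord i)) | i < d]) y
    <= e ^+ 2 *+ d.
  rewrite -[in X in _ <= X](card_ord d) -sumr_const; apply: ler_sum => i _.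
  rewrite !tnth_mktuple.
  by move: (projT2 (cid (e_coord i))); rewrite in_itv /= => /andP[? ?]; nra.
have sq_lt : e ^+ 2 *+ d < r ^+ 2.
  have de : e * (d%:R + 1) = r / 2 by rewrite /e mulfVK // gt_eqF ?ltr_wpDl.
  rewrite -mulr_natl; have := ler0n R d; nra.
by rewrite -ltr_sqr ?nnegrE ?eucl_dist_ge0 ?ltW // -sqdistE (le_lt_trans sq_le).
Qed.

Lemma not_msupport_rat_ball y : ~ msupport mu y ->
  exists p, mu (rat_ball p) = 0%E /\ rat_ball p y.
Proof.
move=> /existsNP[r /not_implyP[r_gt0 /negP]]; rewrite -leNgt => ball_le0.
have ball_null : mu [set w | eucl_dist y w < r] = 0%E.
  by apply/eqP; rewrite eq_le ball_le0 measure_ge0.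
have [c yc] : exists c, eucl_dist (rat_point c) y < r / 2.
  by apply: rat_point_near; lra.
have [s] := rat_in_itvoo yc; rewrite in_itv /= => /andP[cs sr].
exists (c, s); split=> [|//]; apply/eqP; rewrite eq_le measure_ge0 andbT.
rewrite -ball_null; apply: le_measure; rewrite ?inE;
  [exact: measurable_eucl_ball | exact: measurable_eucl_ball |].
move=> w /= cw; apply: (le_lt_trans (eucl_dist_triangle y (rat_point c) w)).
by move: cw; rewrite /rat_ball /= (eucl_distC y); lra.
Qed.

Lemma probability_msupport_sub (A : set (d.-tuple R)) :
  measurable A -> msupport mu `<=` A -> mu A = 1%E.
Proof.
move=> mA suppA.
pose F n := if unpickle n is Some p then
              if pselect (mu (rat_ball p) = 0%E) then rat_ball p else set0
            else set0.
have mF n : measurable (F n).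
  rewrite /F; case: (unpickle n) => [p|]; last exact: measurable0.
  by case: pselect => p_null; [exact: measurable_eucl_ball | exact: measurable0].
have F_null n : mu (F n) = 0%E.
  rewrite /F; case: (unpickle n) => [p|]; last exact: measure0.
  by case: pselect => // p_null; exact: measure0.
have cover : ~` A `<=` \bigcup_(n in ~` `I_0) F n.
  move=> y /= notAy; have [|p [p_null py]] := not_msupport_rat_ball y.
    by move/suppA.
  by exists (pickle p) => //; rewrite /F pickleK; case: pselect.
have compl_null : mu (~` A) = 0%E.
  apply/eqP; rewrite eq_le measure_ge0 andbT.
  have := measure_sigma_subadditive_tail mu mF (measurableC mA) cover.
  by rewrite eseries0 // => n _ _; exact: F_null.
move: (probability_setC mu mA); rewrite compl_null.
move: (probability_le1 mu mA) (measure_ge0 mu A).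
case: (mu A) => [r| |] //= _ _ /eqP.
by rewrite eq_sym -EFinB eqe subr_eq0 => /eqP <-.
Qed.

End SupportOfProbability.

Section QuantileOfSquaredDistance.
Context {R : realType} {d : nat} (mu : probability (d.-tuple R) R).
Implicit Types (z : d.-tuple R) (m t : R).

Lemma cdf_sqdist_le_subset z1 z2 t1 t2 :
  [set w | sqdist w z1 <= t1] `<=` [set w | sqdist w z2 <= t2] ->
  cdf_sqdist mu z1 t1 <= cdf_sqdist mu z2 t2.
Proof.
move=> sub; apply: fine_le;
  try by apply: fin_num_measure; exact: measurable_sqdist_le.
by apply: (le_measure mu _ _ sub); rewrite inE; exact: measurable_sqdist_le.
Qed.

Lemma cdf_sqdist_level_ge0 z m t : 0 < m -> m <= cdf_sqdist mu z t -> 0 <= t.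
Proof.
move=> m_gt0 mt; rewrite leNgt; apply/negP => t_lt0; move: mt; rewrite /cdf_sqdist.
suff -> : [set w | sqdist w z <= t] = set0 by rewrite measure0 /=; lra.
by apply/seteqP; split=> w //= ?; have := sqdist_ge0 w z; lra.
Qed.

Lemma has_lbound_cdf_sqdist_level z m : 0 < m ->
  has_lbound [set t | m <= cdf_sqdist mu z t].
Proof. by move=> m_gt0; exists 0 => t; exact: cdf_sqdist_level_ge0. Qed.

Lemma qtl_sqdist_ge0 z m t : 0 < m -> m <= cdf_sqdist mu z t ->
  0 <= qtl_sqdist mu z m.
Proof.
move=> m_gt0 mt; apply: lb_le_inf; first by exists t.
by move=> s; exact: cdf_sqdist_level_ge0.
Qed.

Lemma qtl_sqdist_le z m t : 0 < m -> m <= cdf_sqdist mu z t ->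
  qtl_sqdist mu z m <= t.
Proof. by move=> m_gt0; apply: ge_inf; exact: has_lbound_cdf_sqdist_level. Qed.

Lemma sqrt_qtl_sqdist_le z1 z2 m t : 0 < m -> m <= cdf_sqdist mu z1 t ->
  Num.sqrt (qtl_sqdist mu z2 m) <= Num.sqrt t + eucl_dist z1 z2.
Proof.
move=> m_gt0 mt; have t_ge0 : 0 <= t by apply: cdf_sqdist_level_ge0 mt.
have r_ge0 : 0 <= Num.sqrt t + eucl_dist z1 z2.
  by rewrite addr_ge0 ?sqrtr_ge0 ?eucl_dist_ge0.
rewrite -(ger0_norm r_ge0) -sqrtr_sqr ler_wsqrtr //.
apply: qtl_sqdist_le m_gt0 (le_trans mt _); apply: cdf_sqdist_le_subset => w /= wt.
have wz1 : eucl_dist w z1 <= Num.sqrt t by rewrite /eucl_dist ler_sqrt.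
have := eucl_dist_triangle w z1 z2; have := eucl_dist_ge0 w z2.
rewrite sqdistE; nra.
Qed.

Lemma sqrt_qtl_sqdist_lipschitz z1 z2 m t : 0 < m -> m <= cdf_sqdist mu z1 t ->
  Num.sqrt (qtl_sqdist mu z2 m) <= Num.sqrt (qtl_sqdist mu z1 m) + eucl_dist z1 z2.
Proof.
move=> m_gt0 mt; set a := Num.sqrt (qtl_sqdist mu z2 m) - eucl_dist z1 z2.
have [a_le0|a_gt0] := leP a 0.
  by have := sqrtr_ge0 (qtl_sqdist mu z1 m); rewrite /a in a_le0; lra.
suff : a ^+ 2 <= qtl_sqdist mu z1 m.
  by move/ler_wsqrtr; rewrite sqrtr_sqr gtr0_norm // /a; lra.
apply: lb_le_inf; first by exists t.
move=> s /= ms; have s_ge0 : 0 <= s by apply: cdf_sqdist_level_ge0 ms.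
rewrite -(sqr_sqrtr s_ge0) ler_sqr ?nnegrE ?sqrtr_ge0 ?(ltW a_gt0) //.
have : Num.sqrt (qtl_sqdist mu z2 m) <= Num.sqrt s + eucl_dist z1 z2.
  exact: sqrt_qtl_sqdist_le ms.
rewrite /a; lra.
Qed.

Lemma sqrt_qtl_sqdist_dist z1 z2 m t1 t2 : 0 < m ->
  m <= cdf_sqdist mu z1 t1 -> m <= cdf_sqdist mu z2 t2 ->
  `|Num.sqrt (qtl_sqdist mu z1 m) - Num.sqrt (qtl_sqdist mu z2 m)|
    <= eucl_dist z1 z2.
Proof.
move=> m_gt0 mt1 mt2; rewrite ler_norml.
have := sqrt_qtl_sqdist_lipschitz z1 z2 m t1 m_gt0 mt1.
have := sqrt_qtl_sqdist_lipschitz z2 z1 m t2 m_gt0 mt2.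
by rewrite eucl_distC => ? ?; apply/andP; split; lra.
Qed.

End QuantileOfSquaredDistance.

Section TruncatedSquare.
Context {R : rcfType}.
Implicit Types u r e K : R.

Lemma min_lipschitz u1 u2 r1 r2 e : `|u1 - u2| <= e -> `|r1 - r2| <= e ->
  `|Order.min u1 r1 - Order.min u2 r2| <= e.
Proof.
rewrite !ler_norml => /andP[? ?] /andP[? ?].
by case: (leP u1 r1) => ?; case: (leP u2 r2) => ?; apply/andP; split; lra.
Qed.

Lemma min_sqr u r : 0 <= u -> 0 <= r ->
  Order.min (u ^+ 2) (r ^+ 2) = Order.min u r ^+ 2.
Proof.
move=> u_ge0 r_ge0; case: (leP u r) => ur; first by rewrite min_l // ler_sqr.
by rewrite min_r // ler_sqr ?nnegrE // ltW.
Qed.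

Lemma min_sqr_lipschitz u1 u2 r1 r2 K e : 0 <= u1 -> 0 <= u2 ->
  0 <= r1 <= K -> 0 <= r2 <= K -> `|u1 - u2| <= e -> `|r1 - r2| <= e ->
  `|Order.min (u1 ^+ 2) (r1 ^+ 2) - Order.min (u2 ^+ 2) (r2 ^+ 2)| <= 2 * K * e.
Proof.
move=> u1_ge0 u2_ge0 /andP[r1_ge0 r1_le] /andP[r2_ge0 r2_le] u12 r12.
have : `|Order.min u1 r1 - Order.min u2 r2| <= e by exact: min_lipschitz.
rewrite !min_sqr //.
have : 0 <= Order.min u1 r1 <= K by rewrite le_min u1_ge0 r1_ge0 ge_min r1_le orbT.
have : 0 <= Order.min u2 r2 <= K by rewrite le_min u2_ge0 r2_ge0 ge_min r2_le orbT.
move: (Order.min u1 r1) (Order.min u2 r2) => a1 a2 /andP[? ?] /andP[? ?].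
rewrite !ler_norml => /andP[? ?]; apply/andP; split; nra.
Qed.

End TruncatedSquare.

Section BoundedExpectation.
Context {d : measure_display} {T : measurableType d} {R : realType}.
Context (mu : probability T R).
Implicit Types (f g : T -> R) (B c : R).

Lemma bounded_integral_fin_num f B : measurable_fun setT f ->
  (forall x, 0 <= f x <= B) -> (\int[mu]_x (f x)%:E)%E \is a fin_num.
Proof.
move=> mf fB; rewrite ge0_fin_numE; last first.
  by apply: integral_ge0 => x _; rewrite lee_fin; case/andP: (fB x).
apply: (@le_lt_trans _ _ (\int[mu]_x (cst B%:E) x)%E).
  apply: ge0_le_integral => //.
  - by move=> x _; rewrite lee_fin; case/andP: (fB x).
  - exact/measurable_realfun.measurable_EFinP.
  - by move=> x _; rewrite lee_fin; case/andP: (fB x).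
by rewrite integral_cst // [X in (_ * X)%E]probability_setT mule1 ltry.
Qed.

Lemma bounded_integral_le_add f g B c :
  measurable_fun setT f -> measurable_fun setT g ->
  (forall x, 0 <= f x <= B) -> (forall x, 0 <= g x <= B) -> 0 <= c ->
  (forall x, f x <= g x + c) ->
  fine (\int[mu]_x (f x)%:E)%E <= fine (\int[mu]_x (g x)%:E)%E + c.
Proof.
move=> mf mg fB gB c_ge0 fgc.
rewrite -lee_fin EFinD !fineK;
  [|exact: bounded_integral_fin_num mg gB|exact: bounded_integral_fin_num mf fB].
apply: (@le_trans _ _ (\int[mu]_x ((g x)%:E + (cst c%:E) x))%E).
  apply: ge0_le_integral => //.
  - by move=> x _; rewrite lee_fin; case/andP: (fB x).
  - exact/measurable_realfun.measurable_EFinP.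
  - by apply: emeasurable_funD => //; exact/measurable_realfun.measurable_EFinP.
  - by move=> x _; rewrite /= -EFinD lee_fin.
rewrite ge0_integralD //; last first.
  - exact/measurable_realfun.measurable_EFinP.
  - by move=> x _; rewrite lee_fin; case/andP: (gB x).
by rewrite integral_cst // [X in (_ * X)%E]probability_setT mule1.
Qed.

Lemma bounded_integral_lipschitz f g B c :
  measurable_fun setT f -> measurable_fun setT g ->
  (forall x, 0 <= f x <= B) -> (forall x, 0 <= g x <= B) ->
  (forall x, `|f x - g x| <= c) ->
  `|fine (\int[mu]_x (f x)%:E)%E - fine (\int[mu]_x (g x)%:E)%E| <= c.
Proof.
move=> mf mg fB gB fg; have c_ge0 : 0 <= c by apply: le_trans (fg point).
have [fg_le gf_le] : (forall x, f x <= g x + c) /\ (forall x, g x <= f x + c).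
  by split=> x; move: (fg x); rewrite ler_norml => /andP[? ?]; lra.
have fg_int : fine (\int[mu]_x (f x)%:E)%E <= fine (\int[mu]_x (g x)%:E)%E + c.
  exact: bounded_integral_le_add mf mg fB gB c_ge0 fg_le.
have gf_int : fine (\int[mu]_x (g x)%:E)%E <= fine (\int[mu]_x (f x)%:E)%E + c.
  exact: bounded_integral_le_add mg mf gB fB c_ge0 gf_le.
by rewrite ler_norml; apply/andP; split; lra.
Qed.

End BoundedExpectation.

Definition trunc_sqdist {R : realType} {d : nat} (mu : probability (d.-tuple R) R)
    (m : R) (z w : d.-tuple R) : R :=
  Order.min (sqdist w z) (qtl_sqdist mu z m).

Section BoundedSupport.
Context {R : realType} {d : nat} {X : set (d.-tuple R)}.
Context {mu : probability (d.-tuple R) R} {T : R}.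
Hypothesis supp_mu : msupport mu = X.
Hypothesis diam_X : forall w z, X w -> X z -> sqdist w z <= T.
Implicit Types (m : R) (x w z : d.-tuple R).

Lemma cdf_sqdist_diam z : X z -> cdf_sqdist mu z T = 1.
Proof.
move=> Xz; rewrite /cdf_sqdist probability_msupport_sub //.
  exact: measurable_sqdist_le.
by rewrite supp_mu => w Xw; exact: diam_X.
Qed.

Lemma qtl_sqdist_diam z m : 0 < m <= 1 -> X z -> 0 <= qtl_sqdist mu z m <= T.
Proof.
move=> /andP[m_gt0 m_le1] Xz.
have mT : m <= cdf_sqdist mu z T by rewrite cdf_sqdist_diam.
by apply/andP; split; [exact: qtl_sqdist_ge0 mT | exact: qtl_sqdist_le mT].
Qed.

Lemma trunc_sqdist_diam m z w : 0 < m <= 1 -> X z -> 0 <= trunc_sqdist mu m z w <= T.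
Proof.
move=> m01 Xz; have /andP[q_ge0 q_le] := qtl_sqdist_diam z m m01 Xz.
by rewrite le_min sqdist_ge0 q_ge0 ge_min q_le orbT.
Qed.

(* Both ||w - z|| and the square root of the quantile are 1-Lipschitz in z and
   bounded by sqrt T, and a^2 - b^2 = (a - b)(a + b). *)
Lemma trunc_sqdist_lipschitz m w z1 z2 : 0 < m <= 1 -> X z1 -> X z2 ->
  `|trunc_sqdist mu m z1 w - trunc_sqdist mu m z2 w|
    <= 2 * Num.sqrt T * eucl_dist z1 z2.
Proof.
move=> m01 Xz1 Xz2; have m_gt0 : 0 < m by case/andP: m01.
have /andP[q1_ge0 q1_le] := qtl_sqdist_diam z1 m m01 Xz1.
have /andP[q2_ge0 q2_le] := qtl_sqdist_diam z2 m m01 Xz2.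
have mT z : X z -> m <= cdf_sqdist mu z T.
  by move=> Xz; rewrite cdf_sqdist_diam //; case/andP: m01.
rewrite /trunc_sqdist !sqdistE -(sqr_sqrtr q1_ge0) -(sqr_sqrtr q2_ge0).
apply: min_sqr_lipschitz; rewrite ?eucl_dist_ge0 ?sqrtr_ge0 ?ler_wsqrtr //.
  exact: eucl_dist_lipschitz.
exact: sqrt_qtl_sqdist_dist m_gt0 (mT _ Xz1) (mT _ Xz2).
Qed.

Lemma Psi_lipschitz m x z1 z2 : 0 < m <= 1 -> X z1 -> X z2 ->
  `|Psi mu m x z1 - Psi mu m x z2| <= 4 * Num.sqrt T * eucl_dist z1 z2.
Proof.
move=> m01 Xz1 Xz2.
have PsiE z : Psi mu m x z =
    trunc_sqdist mu m z x - fine (\int[mu]_w (trunc_sqdist mu m z w)%:E)%E by [].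
have mtrunc z : measurable_fun setT (trunc_sqdist mu m z).
  exact: measurable_realfun.measurable_minr (measurable_sqdistl z) (measurable_cst _).
set e := 2 * Num.sqrt T * eucl_dist z1 z2.
have trunc_e w : `|trunc_sqdist mu m z1 w - trunc_sqdist mu m z2 w| <= e.
  exact: trunc_sqdist_lipschitz.
have int_e : `|fine (\int[mu]_w (trunc_sqdist mu m z1 w)%:E)%E
              - fine (\int[mu]_w (trunc_sqdist mu m z2 w)%:E)%E| <= e.
  apply: bounded_integral_lipschitz trunc_e; rewrite ?mtrunc //.
    by move=> w; exact: trunc_sqdist_diam.
  by move=> w; exact: trunc_sqdist_diam.
have regroup (a1 a2 b1 b2 : R) : (a1 - b1) - (a2 - b2) = (a1 - a2) - (b1 - b2).
  by ring.
rewrite !PsiE regroup (_ : 4 * _ * _ = e + e); last by rewrite /e; ring.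
exact: le_trans (ler_normB _ _) (lerD (trunc_e x) int_e).
Qed.

End BoundedSupport.

Theorem lemmaC4 (R : realType) (d : nat) (X : set (d.-tuple R))
    (mu : probability (d.-tuple R) R) :
  regular_euclidean_mms X mu ->
  exists C : R, 0 < C /\
    forall m : R, 0 < m <= 1 ->
    forall x1 z1 z2 : d.-tuple R, X x1 -> X z1 -> X z2 ->
      `|Psi mu m x1 z1 - Psi mu m x1 z2| <= C * eucl_dist z1 z2.
Proof.
move=> [/compact_sqdist_bounded[T [T_gt0 diam_X]] [supp_mu _]].
exists (4 * Num.sqrt T); split; first by rewrite mulr_gt0 ?sqrtr_gt0.
move=> m m01 x1 z1 z2 _ Xz1 Xz2.
exact: (Psi_lipschitz supp_mu diam_X).
Qed.
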